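(* For $n\ge2$ and $c\ge1$, the abelianization of $UW_n(c)$ is isomorphic to $\mathbb{Z}^c\oplus\mathbb{Z}_2$.
   Context: $UV_n(c)$ ($n\ge2$, $c\ge1$) is the group with generators $\rho_i$ ($1\le i\le n-1$), $\sigma_{i,t}$ ($1\le i\le n-1$, $1\le t\le c$) and relations $\rho_i\rho_{i+1}\rho_i=\rho_{i+1}\rho_i\rho_{i+1}$ ($1\le i\le n-2$), $\rho_i\rho_j=\rho_j\rho_i$ ($|i-j|\ge2$), $\rho_i^2=1$, $\sigma_{i,t}\sigma_{j,\ell}=\sigma_{j,\ell}\sigma_{i,t}$ ($|i-j|\ge2$, $1\le t,\ell\le c$), $\sigma_{i,t}\rho_j=\rho_j\sigma_{i,t}$ ($|i-j|\ge2$), $\rho_i\rho_{i+1}\sigma_{i,t}=\sigma_{i+1,t}\rho_i\rho_{i+1}$ ($1\le i\le n-2$, $1\le t\le c$). The universal welded braid group $UW_n(c)$ is the quotient of $UV_n(c)$ by the additional (welded) relations $\rho_i\sigma_{i+1,t}\sigma_{i,t}=\sigma_{i+1,t}\sigma_{i,t}\rho_{i+1}$ for all $1\le i\le n-2$, $1\le t\le c$. *)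

From mathcomp Require Import all_boot all_order all_algebra.
Set Implicit Arguments. Unset Strict Implicit. Unset Printing Implicit Defensive.
Import GRing.Theory.

(* Generators of UV_n(c), 0-based: Rho i (i : 'I_(n-1)) is rho_{i+1},
   Sig i t is sigma_{i+1, t+1}. *)
Inductive UVgen (n c : nat) : Type :=
| Rho of 'I_n.-1
| Sig of 'I_n.-1 & 'I_c.

(* A letter is a generator together with an exponent sign
   (false = g, true = g^-1); words are elements of the free monoid
   on letters; the free group is its quotient by free reduction. *)
Definition letter n c := (UVgen n c * bool)%type.
Definition word n c := seq (letter n c).

Definition pos n c (g : UVgen n c) : letter n c := (g, false).
Definition inv_letter n c (x : letter n c) : letter n c := (x.1, ~~ x.2).

Definition far (i j : nat) : bool := (i.+2 <= j) || (j.+2 <= i).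

Inductive UWrel (n c : nat) : word n c -> word n c -> Prop :=
| R_braid (i j : 'I_n.-1) : val j = (val i).+1 ->
    UWrel [:: pos (Rho c i); pos (Rho c j); pos (Rho c i)]
          [:: pos (Rho c j); pos (Rho c i); pos (Rho c j)]
| R_rhocomm (i j : 'I_n.-1) : far i j ->
    UWrel [:: pos (Rho c i); pos (Rho c j)] [:: pos (Rho c j); pos (Rho c i)]
| R_rhosq (i : 'I_n.-1) :
    UWrel [:: pos (Rho c i); pos (Rho c i)] [::]
| R_sigcomm (i j : 'I_n.-1) (t l : 'I_c) : far i j ->
    UWrel [:: pos (Sig i t); pos (Sig j l)] [:: pos (Sig j l); pos (Sig i t)]
| R_sigrho (i j : 'I_n.-1) (t : 'I_c) : far i j ->
    UWrel [:: pos (Sig i t); pos (Rho c j)] [:: pos (Rho c j); pos (Sig i t)]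
| R_mixed (i j : 'I_n.-1) (t : 'I_c) : val j = (val i).+1 ->
    UWrel [:: pos (Rho c i); pos (Rho c j); pos (Sig i t)]
          [:: pos (Sig j t); pos (Rho c i); pos (Rho c j)]
| R_welded (i j : 'I_n.-1) (t : 'I_c) : val j = (val i).+1 ->
    UWrel [:: pos (Rho c i); pos (Sig j t); pos (Sig i t)]
          [:: pos (Sig j t); pos (Sig i t); pos (Rho c j)].

(* Equality in the abelianization UW_n(c)/[UW_n(c),UW_n(c)]: the smallest
   congruence on words containing free reduction, the defining relations,
   and u v = v u for all words u v (i.e. killing all commutators). *)
Inductive UWab_eq (n c : nat) : word n c -> word n c -> Prop :=
| Ab_refl w : UWab_eq w w
| Ab_sym w1 w2 : UWab_eq w1 w2 -> UWab_eq w2 w1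
| Ab_trans w1 w2 w3 : UWab_eq w1 w2 -> UWab_eq w2 w3 -> UWab_eq w1 w3
| Ab_ctx u v w1 w2 : UWab_eq w1 w2 -> UWab_eq (u ++ w1 ++ v) (u ++ w2 ++ v)
| Ab_free (x : letter n c) : UWab_eq [:: x; inv_letter x] [::]
| Ab_rel l r : UWrel l r -> UWab_eq l r
| Ab_comm u v : UWab_eq (u ++ v) (v ++ u).

From mathcomp Require Import all_boot all_order all_algebra zify.
Import GRing.Theory.
Set Implicit Arguments.
Unset Strict Implicit.
Unset Printing Implicit Defensive.
Local Open Scope ring_scope.

(* The map [abel] records, for each colour t, the exponent sum of the letters
   sigma_{i,t}^{+-1}, and the parity of the number of rho letters.  Every
   defining relation preserves these counts, so [abel] factors through the
   abelianization.  Conversely, in the abelianization the braid relation and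
   rho_i^2 = 1 identify all rho_i^{+-1}, and the mixed relation
   rho_i rho_{i+1} sigma_{i,t} = sigma_{i+1,t} rho_i rho_{i+1} identifies
   sigma_{i,t} with sigma_{i+1,t}; so in a word whose counts vanish, every
   letter has a partner cancelling it, and the word is trivial. *)

Lemma ord_adjacent_equiv m (R : 'I_m -> 'I_m -> Prop) :
  (forall i, R i i) -> (forall i j, R i j -> R j i) ->
  (forall i j k, R i j -> R j k -> R i k) ->
  (forall i j : 'I_m, val j = (val i).+1 -> R i j) ->
  forall i j, R i j.
Proof.
move=> Rrefl Rsym Rtrans Radj [i ltim] [j ltjm].
have m_gt0 : (0 < m)%N by lia.
suff to0 k (ltkm : (k < m)%N) : R (Ordinal ltkm) (Ordinal m_gt0).
  exact: Rtrans (to0 i ltim) (Rsym _ _ (to0 j ltjm)).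
elim: k ltkm => [|k IHk] ltkm; first by rewrite (bool_irrelevance ltkm m_gt0).
have ltkm' : (k < m)%N by lia.
exact: Rtrans (Rsym _ _ (Radj (Ordinal ltkm') (Ordinal ltkm) erefl)) (IHk ltkm').
Qed.

Section Abelianization.

Variables n c : nat.
Local Notation letter := (letter n c).
Local Notation word := (word n c).
Local Notation UWab := (@UWab_eq n c).
Implicit Types (x y : letter) (u v w : word).

Lemma UWab_cat u u' v v' : UWab u u' -> UWab v v' -> UWab (u ++ v) (u' ++ v').
Proof.
move=> uu' vv'; apply: (Ab_trans (w2 := u' ++ v)); first exact: (Ab_ctx [::] v uu').
by have := Ab_ctx u' [::] vv'; rewrite !cats0.
Qed.

Definition winv w : word := rev (map (@inv_letter n c) w).

Lemma winvK : involutive winv.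
Proof.
move=> w; rewrite /winv map_rev revK -map_comp (eq_map (g := id)) ?map_id //.
by case=> g s; rewrite /= /inv_letter negbK.
Qed.

Lemma UWab_catwinv w : UWab (w ++ winv w) [::].
Proof.
elim: w => [|x w IHw]; first exact: Ab_refl.
rewrite /winv /= rev_cons -cats1 -/(winv w) catA.
apply: Ab_trans (Ab_ctx [:: x] [:: inv_letter x] IHw) (Ab_free x).
Qed.

Lemma UWab_cancelr u v w : UWab (u ++ w) (v ++ w) -> UWab u v.
Proof.
have cancel_w u' : UWab ((u' ++ w) ++ winv w) u'.
  by rewrite -catA; have := UWab_cat (Ab_refl u') (UWab_catwinv w); rewrite cats0.
move=> uv; apply: Ab_trans (Ab_sym (cancel_w u)) (Ab_trans _ (cancel_w v)).
exact: UWab_cat uv (Ab_refl _).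
Qed.

Lemma UWab_of_catwinv u v : UWab (u ++ winv v) [::] -> UWab u v.
Proof.
move=> uv; apply: (UWab_cancelr (w := winv v)).
exact: Ab_trans uv (Ab_sym (UWab_catwinv v)).
Qed.

Lemma UWab_winv u v : UWab u v -> UWab (winv u) (winv v).
Proof.
move=> uv; apply: UWab_of_catwinv; rewrite winvK.
apply: Ab_trans (UWab_cat (Ab_refl _) (Ab_sym uv)) _.
exact: Ab_trans (Ab_comm _ _) (UWab_catwinv u).
Qed.

Lemma UWab_involution_inv x : UWab [:: x; x] [::] -> UWab [:: inv_letter x] [:: x].
Proof.
move=> xx; apply: (UWab_cancelr (w := [:: x])).
apply: Ab_trans (Ab_comm [:: inv_letter x] [:: x]) _.
exact: Ab_trans (Ab_free x) (Ab_sym xx).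
Qed.

Lemma UWab_conj_involution x y : UWab [:: x; x] [::] -> UWab [:: x; y; x] [:: y].
Proof.
move=> xx; apply: Ab_trans (UWab_cat (Ab_refl [:: x]) (Ab_comm [:: y] [:: x])) _.
exact: UWab_cat xx (Ab_refl [:: y]).
Qed.

Lemma UWab_rho_sq (i : 'I_n.-1) : UWab [:: pos (Rho c i); pos (Rho c i)] [::].
Proof. exact/Ab_rel/R_rhosq. Qed.

Lemma UWab_rho (i j : 'I_n.-1) s s' : UWab [:: (Rho c i, s)] [:: (Rho c j, s')].
Proof.
have rho_pos (i' : 'I_n.-1) s'' : UWab [:: (Rho c i', s'')] [:: pos (Rho c i')].
  by case: s''; [apply: UWab_involution_inv (UWab_rho_sq i') | apply: Ab_refl].
apply: Ab_trans (rho_pos i s) (Ab_trans _ (Ab_sym (rho_pos j s'))).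
move: i j; apply: ord_adjacent_equiv => [i|i j|i j k|i j ji] /=.
- exact: Ab_refl.
- exact: Ab_sym.
- exact: Ab_trans.
apply: Ab_trans (Ab_sym (UWab_conj_involution _ (UWab_rho_sq j))) _.
apply: Ab_trans (Ab_sym (Ab_rel (R_braid c ji))) _.
exact: UWab_conj_involution _ (UWab_rho_sq i).
Qed.

Lemma UWab_sig (i j : 'I_n.-1) (t : 'I_c) s : UWab [:: (Sig i t, s)] [:: (Sig j t, s)].
Proof.
suff sig_pos : UWab [:: pos (Sig i t)] [:: pos (Sig j t)].
  by case: s; first exact: UWab_winv sig_pos.
move: i j; apply: ord_adjacent_equiv => [i|i j|i j k|i j ji] /=.
- exact: Ab_refl.
- exact: Ab_sym.
- exact: Ab_trans.
apply: (UWab_cancelr (w := [:: pos (Rho c i); pos (Rho c j)])).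
apply: Ab_trans (Ab_comm [:: pos (Sig i t)] _) _.
exact: Ab_rel (R_mixed t ji).
Qed.

Definition is_rho x : bool := if x.1 is Rho _ then true else false.

Definition is_sig (t : 'I_c) (s : bool) x : bool :=
  if x is (Sig _ t', s') then (t' == t) && (s' == s) else false.

Definition sig_exp (t : 'I_c) w : int :=
  (count (is_sig t false) w)%:Z - (count (is_sig t true) w)%:Z.

Definition rho_parity w : 'Z_2 := (count is_rho w)%:R.

Definition abel w : 'rV[int]_c * 'Z_2 := (\row_t sig_exp t w, rho_parity w).

Lemma abel_cat u v : abel (u ++ v) = abel u + abel v.
Proof.
rewrite /abel /rho_parity count_cat natrD; congr (_, _).
by apply/rowP => t; rewrite !mxE /sig_exp !count_cat; lia.
Qed.

Lemma abel_winv w : abel (winv w) = - abel w.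
Proof.
have is_sig_inv t s : preim (@inv_letter n c) (is_sig t s) =1 is_sig t (~~ s).
  by case=> [[i|i t'] [] /=]; case: s.
have is_rho_inv : preim (@inv_letter n c) is_rho =1 is_rho by case=> [[]].
rewrite /abel /rho_parity /winv count_rev count_map (eq_count is_rho_inv).
congr (_, _); last exact/esym/(oppr_pchar2 (pchar_Fp (isT : prime 2))).
apply/rowP => t; rewrite !mxE /sig_exp !count_rev !count_map.
by rewrite !(eq_count (is_sig_inv t _)) /=; lia.
Qed.

Lemma abel_nil : abel [::] = 0.
Proof. by congr (_, _); apply/rowP => t; rewrite !mxE. Qed.

Lemma abel_UWab u v : UWab u v -> abel u = abel v.
Proof.
elim=> {u v} [//|u v _ //|u v w _ -> _ //|a b u v _ uv|x|l r|u v].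
- by rewrite !abel_cat uv.
- by rewrite -[[:: x; _]]/([:: x] ++ winv [:: x]) abel_cat abel_winv subrr abel_nil.
- case=> * {l r}; congr (_, _);
    first [exact/val_inj | apply/rowP => t; rewrite !mxE /sig_exp /=; lia].
- by rewrite !abel_cat addrC.
Qed.

Definition cancels x : pred letter :=
  if x is (Sig _ t, s) then is_sig t (~~ s) else is_rho.

Lemma UWab_cancels x y : cancels x y -> UWab [:: x; y] [::].
Proof.
case: x y => [[i|i t] s] [[j|j t'] s'] //=.
  move=> _; apply: Ab_trans (UWab_rho_sq i).
  exact: UWab_cat (UWab_rho i i s false) (UWab_rho j i s' false).
case/andP=> /eqP -> /eqP ->.
apply: Ab_trans (Ab_free (Sig i t, s)).
exact: UWab_cat (Ab_refl [:: (Sig i t, s)]) (UWab_sig j i t (~~ s)).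
Qed.

Lemma UWab_cancel_pair x y a b : cancels x y -> UWab (x :: a ++ y :: b) (a ++ b).
Proof.
move=> xy; apply: Ab_trans (UWab_cat (UWab_cancels xy) (Ab_refl (a ++ b))).
by have := Ab_ctx [:: x] b (Ab_comm a [:: y]); rewrite -!catA.
Qed.

Lemma has_cancels x w : abel (x :: w) = 0 -> has (cancels x) w.
Proof.
case: x => [[i|i t] s] /=.
  by move/(congr1 (val \o snd)); rewrite /= val_Zp_nat //= has_count; lia.
move/(congr1 (fun z : 'rV[int]_c * 'Z_2 => z.1 0 t)).
rewrite /= !mxE /sig_exp /= eqxx has_count.
by case: s => /=; lia.
Qed.

Lemma UWab_nil_of_abel0 w : abel w = 0 -> UWab w [::].
Proof.
have [k] := ubnP (size w); elim: k w => // k IHk [|x w] /= size_w abel0.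
  exact: Ab_refl.
have has_xy := has_cancels abel0; move: abel0 size_w.
case/split_find: has_xy => y a b xy _; rewrite cat_rcons => abel0 size_w.
have cancel_xy := UWab_cancel_pair a b xy.
apply: (Ab_trans cancel_xy (IHk _ _ _)).
  by move: size_w; rewrite ltnS size_cat /= addnS size_cat => /ltnW.
by rewrite -(abel_UWab cancel_xy).
Qed.

Lemma UWab_abelP u v : UWab u v <-> abel u = abel v.
Proof.
split=> [|uv]; first exact: abel_UWab.
apply/UWab_of_catwinv/UWab_nil_of_abel0.
by rewrite abel_cat abel_winv uv subrr.
Qed.

Lemma abel_flatten (T : Type) (f : T -> word) s :
  abel (flatten (map f s)) = \sum_(x <- s) abel (f x).
Proof.
by elim: s => [|x s IHs]; rewrite ?big_nil ?abel_nil //= abel_cat IHs big_cons.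
Qed.

Lemma abel_sig_pow (i : 'I_n.-1) (t : 'I_c) (k : int) :
  abel (nseq `|k|%N (Sig i t, k < 0)) = (k *: delta_mx 0 t, 0).
Proof.
congr (_, _); last by rewrite /rho_parity count_nseq mul0n.
apply/rowP => t'; rewrite !mxE /sig_exp !count_nseq /= eq_sym.
by case: (t == t'); case: k => m /=; lia.
Qed.

Lemma abel_rho_pow (i : 'I_n.-1) (z : 'Z_2) : abel (nseq z (pos (Rho c i))) = (0, z).
Proof.
congr (_, _); last by rewrite /rho_parity count_nseq mul1n natr_Zp.
by apply/rowP => t; rewrite !mxE /sig_exp !count_nseq.
Qed.

Lemma abel_surj (i : 'I_n.-1) z : exists w, abel w = z.
Proof.
case: z => v z.
exists (flatten [seq nseq (absz (v 0 t)) (Sig i t, v 0 t < 0) | t <- index_enum 'I_c]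
        ++ nseq z (pos (Rho c i))).
rewrite abel_cat abel_flatten abel_rho_pow.
under eq_bigr do rewrite abel_sig_pow.
by rewrite [LHS]surjective_pairing /= !raddf_sum /= big1_eq addr0 add0r -row_sum_delta.
Qed.

End Abelianization.

Theorem proposition5p7 (n c : nat) (hn : (2 <= n)%N) (hc : (1 <= c)%N) :
  exists phi : word n c -> ('rV[int]_c * 'Z_2)%type,
    (forall w1 w2, phi (w1 ++ w2) = phi w1 + phi w2) /\
    (forall w1 w2, UWab_eq w1 w2 <-> phi w1 = phi w2) /\
    (forall z, exists w, phi w = z).
Proof.
have n1_gt0 : (0 < n.-1)%N by lia.
exists (@abel n c); split; [exact: abel_cat | split; [exact: UWab_abelP |]].
exact: abel_surj (Ordinal n1_gt0).
Qed.
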